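(* Let $M>0$ and let $(q(t),p(t))$ with $q(t)>0$ be a solution of Hamilton's equations $\dot q=\partial\mathcal H/\partial p$, $\dot p=-\partial\mathcal H/\partial q$ for the single rotating circular peakon Hamiltonian $\mathcal H(p,q)=\frac12\big(p^2+\frac{M^2}{q^2}\big)G(q,q)$, and let $E=\big(p^2+\frac{M^2}{q^2}\big)G(q,q)>0$ be its (conserved) value along the solution. Then there is a unique $q_*=q_*(M,E)>0$ satisfying $$q_*=M\sqrt{\frac{G(q_*,q_* )}{E}},$$ and $q(t)\ge q_*$ for all $t$ in the interval of existence; in particular the peakon circle never collapses to the origin.
   Context: $G(q,q)=I_1(q)K_1(q)$, where $I_1,K_1$ are the modified Bessel functions of order one; more generally $G(r,\xi)=I_1(\min(r,\xi))K_1(\max(r,\xi))$ is the Green's function of the radial Helmholtz operator $1-\frac1r\partial_r r\partial_r+\frac1{r^2}$. *)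

From Stdlib Require Import Reals Lra Factorial.
From Coquelicot Require Import Coquelicot.
Open Scope R_scope.

Definition BesselI1 (x : R) : R :=
  Series (fun k => (x / 2) ^ (2 * k + 1) / (INR (fact k) * INR (fact (S k)))).

Definition BesselK1 (x : R) : R :=
  RInt_gen (fun t => exp (- x * cosh t) * cosh t)
           (at_point 0) (Rbar_locally p_infty).

(* Green's function of the radial Helmholtz operator. *)
Definition G (r xi : R) : R := BesselI1 (Rmin r xi) * BesselK1 (Rmax r xi).

Definition Hpeak (M p q : R) : R := / 2 * (p ^ 2 + M ^ 2 / q ^ 2) * G q q.

(* Hamilton's equations conserve H, so (p^2 + M^2/q^2) G(q,q) = E along the solution and
   hence G(q,q)/q^2 <= E/M^2.  The function y |-> G(y,y)/y^2 = I1(y) K1(y)/y^2 is continuous,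
   tends to +oo at 0, and is strictly decreasing: the power series of I1 shows that
   exp(-y) I1(y)/y is nonincreasing, the integral representation of K1 shows that
   exp(y) K1(y) is nonincreasing, so G(y,y)/y is nonincreasing.  The fixed-point equation
   for qs is equivalent to G(qs,qs)/qs^2 = E/M^2, which therefore has exactly one positive
   solution, and q(t) >= qs follows by monotonicity. *)

From Stdlib Require Import Reals Lra Lia Factorial Classical_Prop.
From Coquelicot Require Import Coquelicot.
Open Scope R_scope.

Lemma ex_RInt_continuous_R (f : R -> R) (u v : R) :
  (forall t, continuous f t) -> ex_RInt f u v.
Proof. intro Hc; apply (@ex_RInt_continuous R_CompleteNormedModule); auto. Qed.

Lemma RInt_nonneg_le_r (f : R -> R) (a b0 b : R) :
  (forall t, continuous f t) -> (forall t, a <= t -> 0 <= f t) ->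
  a <= b0 <= b -> RInt f a b0 <= RInt f a b.
Proof.
intros Hc Hf Hb.
rewrite <- (RInt_Chasles f a b0 b) by (apply ex_RInt_continuous_R; auto).
assert (0 <= RInt f b0 b) by (apply RInt_ge_0; [lra | apply ex_RInt_continuous_R; auto |
  intros; apply Hf; lra]).
unfold plus; simpl; lra.
Qed.

Lemma filter_prod_at_point_pinfty (a : R) (P : R -> R -> Prop) :
  (forall b, a < b -> P a b) ->
  filter_prod (at_point a) (Rbar_locally p_infty) (fun ab : R * R => P (fst ab) (snd ab)).
Proof.
intro HP. apply (Filter_prod _ _ _ (fun u => u = a) (fun b => a < b)).
- reflexivity.
- exists a; auto.
- intros u b -> Hb; apply HP, Hb.
Qed.

(* The improper integral is the supremum of the partial integrals. *)
Lemma is_RInt_gen_nonneg_bounded (f : R -> R) (a B : R) :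
  (forall t, continuous f t) -> (forall t, a <= t -> 0 <= f t) ->
  (forall b, a <= b -> RInt f a b <= B) ->
  exists l, is_RInt_gen f (at_point a) (Rbar_locally p_infty) l /\
            forall b, a <= b -> RInt f a b <= l.
Proof.
intros Hc Hf HB.
set (S := fun y => exists b, a <= b /\ y = RInt f a b).
destruct (completeness S) as [l [Hub Hlub]].
- exists B; intros y [b [Hb ->]]; auto.
- exists (RInt f a a), a; split; auto; lra.
- assert (Hpart : forall b, a <= b -> RInt f a b <= l) by (intros b Hb; apply Hub; exists b; auto).
  exists l; split; [|exact Hpart].
  intros P [eps Heps].
  assert (Hb0 : exists b0, a <= b0 /\ l - eps < RInt f a b0).
  { apply NNPP; intro Hn.
    assert (l <= l - eps) by (apply Hlub; intros y [b [Hb ->]];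
      apply Rnot_lt_le; intro Hlt; apply Hn; exists b; auto).
    destruct eps; simpl in *; lra. }
  destruct Hb0 as [b0 [Hab0 Hl]].
  apply (Filter_prod _ _ _ (fun u => u = a) (fun b => b0 < b)); [reflexivity | exists b0; auto |].
  intros u b -> Hb. exists (RInt f a b); split.
  + apply (@RInt_correct R_CompleteNormedModule), ex_RInt_continuous_R; auto.
  + apply Heps.
    assert (RInt f a b0 <= RInt f a b) by (apply RInt_nonneg_le_r; auto; lra).
    assert (RInt f a b <= l) by (apply Hpart; lra).
    change (Rabs (RInt f a b - l) < eps); apply Rabs_def1; destruct eps; simpl in *; lra.
Qed.

Lemma pow_div_fact_le_exp (y : R) (n : nat) : 0 <= y -> y ^ n / INR (fact n) <= exp y.
Proof.
intro Hy. eapply Rle_trans; [|apply (exp_ge_taylor y n Hy)].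
destruct n as [|n]; [simpl; lra|].
rewrite tech5.
assert (0 <= sum_f_R0 (fun k => y ^ k / INR (fact k)) n); [|lra].
apply cond_pos_sum; intro k.
apply Rmult_le_pos; [apply pow_le; auto | left; apply Rinv_0_lt_compat, INR_fact_lt_0].
Qed.

Lemma exp_le_compat (u v : R) : u <= v -> exp u <= exp v.
Proof. intros [H | ->]; [left; apply exp_increasing, H | right; reflexivity]. Qed.

Lemma cosh_ge_1 (t : R) : 1 <= cosh t.
Proof. unfold cosh. pose proof (exp_ineq1_le t). pose proof (exp_ineq1_le (- t)). lra. Qed.

Lemma exp_le_2cosh (t : R) : exp t <= 2 * cosh t.
Proof. unfold cosh. pose proof (exp_pos (- t)). lra. Qed.

(* [Kcosh 1] is [BesselK1]; the higher moments arise as its derivatives. *)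
Definition kcosh (n : nat) (x t : R) : R := exp (- x * cosh t) * cosh t ^ n.

Definition Kcosh (n : nat) (x : R) : R :=
  RInt_gen (kcosh n x) (at_point 0) (Rbar_locally p_infty).

Lemma kcosh_continuous (n : nat) (x t : R) : continuous (kcosh n x) t.
Proof.
apply (@ex_derive_continuous R_AbsRing R_NormedModule). unfold kcosh, cosh. auto_derive. auto.
Qed.

Lemma kcosh_pos (n : nat) (x t : R) : 0 < kcosh n x t.
Proof.
unfold kcosh. apply Rmult_lt_0_compat; [apply exp_pos | apply pow_lt].
pose proof (cosh_ge_1 t); lra.
Qed.

Lemma kcosh_le_exp (n : nat) (x t : R) : 0 < x ->
  kcosh n x t <= 2 * INR (fact (S n)) / x ^ S n * exp (- t).
Proof.
intro Hx. unfold kcosh.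
set (c := cosh t). set (N := INR (fact (S n))).
assert (Hc : 1 <= c) by apply cosh_ge_1.
assert (HN : 0 < N) by apply INR_fact_lt_0.
assert (Hxn : 0 < x ^ S n) by (apply pow_lt; lra).
assert (Hcn : 0 < c ^ n) by (apply pow_lt; lra).
assert (HT : exp t <= 2 * c) by apply exp_le_2cosh.
assert (HE : (x * c) ^ S n / N <= exp (x * c)) by (apply pow_div_fact_le_exp; nra).
rewrite Rpow_mult_distr in HE.
rewrite exp_Ropp, Ropp_mult_distr_l_reverse, exp_Ropp.
pose proof (exp_pos t). pose proof (exp_pos (x * c)).
apply (Rmult_le_reg_r (exp (x * c) * exp t * x ^ S n / N)).
{ apply Rdiv_lt_0_compat; [apply Rmult_lt_0_compat; [apply Rmult_lt_0_compat|] | ]; lra. }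
replace (/ exp (x * c) * c ^ n * (exp (x * c) * exp t * x ^ S n / N))
  with (c ^ n * x ^ S n * exp t / N) by (field; lra).
replace (2 * N / x ^ S n * / exp t * (exp (x * c) * exp t * x ^ S n / N))
  with (2 * exp (x * c)) by (field; lra).
apply Rle_trans with (c ^ n * x ^ S n * (2 * c) / N).
{ apply Rmult_le_compat_r; [left; apply Rinv_0_lt_compat; lra|].
  apply Rmult_le_compat_l; [nra | lra]. }
replace (c ^ n * x ^ S n * (2 * c) / N) with (2 * (x ^ S n * c ^ S n / N)) by (simpl; field; lra).
lra.
Qed.

Lemma RInt_exp_neg_le (C b : R) : 0 <= C -> 0 <= b -> RInt (fun t => C * exp (- t)) 0 b <= C.
Proof.
intros HC Hb.
assert (H : is_RInt (fun t => C * exp (- t)) 0 b (- C * exp (- b) - - C * exp (- 0))).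
{ apply (is_RInt_derive (fun t => - C * exp (- t))).
  - intros y _. auto_derive; auto. ring.
  - intros y _. apply (@ex_derive_continuous R_AbsRing R_NormedModule). auto_derive. auto. }
rewrite (is_RInt_unique _ _ _ _ H), Ropp_0, exp_0.
pose proof (exp_pos (- b)). nra.
Qed.

Lemma Kcosh_correct (n : nat) (x : R) : 0 < x ->
  is_RInt_gen (kcosh n x) (at_point 0) (Rbar_locally p_infty) (Kcosh n x) /\
  forall b, 0 <= b -> RInt (kcosh n x) 0 b <= Kcosh n x.
Proof.
intro Hx.
set (C := 2 * INR (fact (S n)) / x ^ S n).
assert (HC : 0 <= C).
{ apply Rlt_le, Rdiv_lt_0_compat; [pose proof (INR_fact_lt_0 (S n)); lra | apply pow_lt; lra]. }
destruct (is_RInt_gen_nonneg_bounded (kcosh n x) 0 C) as [l [Hl Hpart]].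
- apply kcosh_continuous.
- intros; left; apply kcosh_pos.
- intros b Hb. eapply Rle_trans; [|apply (RInt_exp_neg_le C b HC Hb)].
  apply RInt_le; auto.
  + apply ex_RInt_continuous_R, kcosh_continuous.
  + apply ex_RInt_continuous_R. intro.
    apply (@ex_derive_continuous R_AbsRing R_NormedModule). auto_derive. auto.
  + intros; apply kcosh_le_exp; auto.
- replace (Kcosh n x) with l by (symmetry; apply is_RInt_gen_unique, Hl). auto.
Qed.

Lemma Kcosh_pos (n : nat) (x : R) : 0 < x -> 0 < Kcosh n x.
Proof.
intro Hx. destruct (Kcosh_correct n x Hx) as [_ H].
eapply Rlt_le_trans; [|apply (H 1); lra].
apply RInt_gt_0; [lra | intros; apply kcosh_pos | intros; apply kcosh_continuous].
Qed.

Lemma BesselK1_Kcosh (x : R) : 0 < x -> BesselK1 x = Kcosh 1 x.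
Proof.
intro Hx. unfold BesselK1, Kcosh. symmetry. apply RInt_gen_ext_eq.
- intro t. unfold kcosh. simpl. rewrite Rmult_1_r. reflexivity.
- exists (Kcosh 1 x). apply Kcosh_correct; auto.
Qed.

Lemma Kcosh_le_shift (n : nat) (x y : R) : 0 < x -> x <= y ->
  Kcosh n y <= exp (x - y) * Kcosh n x.
Proof.
intros Hx Hxy.
destruct (Kcosh_correct n y) as [Iy _]; [lra|].
destruct (Kcosh_correct n x Hx) as [Ix _].
eapply Rle_trans; [apply Rle_abs|].
refine (RInt_gen_norm (kcosh n y) _ _ _
  (filter_prod_at_point_pinfty 0 (fun a b => a <= b) _) _ Iy (is_RInt_gen_scal _ (exp (x - y)) _ Ix)).
- intros; lra.
- apply (filter_prod_at_point_pinfty 0 (fun a b => forall t, a <= t <= b -> _)).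
  intros b _ t _. unfold norm, scal; simpl; unfold abs, mult; simpl.
  rewrite Rabs_pos_eq by (left; apply kcosh_pos).
  unfold kcosh. rewrite <- Rmult_assoc, <- exp_plus.
  apply Rmult_le_compat_r; [apply pow_le; pose proof (cosh_ge_1 t); lra|].
  apply exp_le_compat. pose proof (cosh_ge_1 t). nra.
Qed.

Lemma exp_sub_tangent_bound (u : R) : 0 <= exp u - 1 - u <= u ^ 2 * exp (Rabs u).
Proof.
pose proof (exp_ineq1_le u). pose proof (exp_ineq1_le (- u)) as H2.
pose proof (exp_pos u).
assert (exp u - 1 <= u * exp u).
{ rewrite exp_Ropp in H2. assert (exp u * / exp u = 1) by (field; lra). nra. }
split; [lra|].
destruct (Rle_or_lt 0 u).
- rewrite Rabs_pos_eq by lra. nra.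
- rewrite Rabs_left by lra. nra.
Qed.

Lemma kcosh_taylor_remainder (n : nat) (x h t : R) : 0 < x -> Rabs h <= x / 2 ->
  Rabs (kcosh n (x + h) t - kcosh n x t + h * kcosh (S n) x t)
  <= h ^ 2 * kcosh (S (S n)) (x / 2) t.
Proof.
intros Hx Hh. unfold kcosh. set (c := cosh t).
assert (Hc : 1 <= c) by apply cosh_ge_1.
replace (exp (- (x + h) * c) * c ^ n - exp (- x * c) * c ^ n + h * (exp (- x * c) * c ^ S n))
  with (c ^ n * exp (- x * c) * (exp (- h * c) - 1 - (- h * c)))
  by (replace (- (x + h) * c) with (- x * c + - h * c) by ring; rewrite exp_plus; simpl; ring).
destruct (exp_sub_tangent_bound (- h * c)) as [T1 T2].
assert (Hp : 0 <= c ^ n * exp (- x * c)) by (apply Rmult_le_pos; [apply pow_le; lra | left; apply exp_pos]).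
rewrite Rabs_pos_eq by (apply Rmult_le_pos; auto).
assert (Habs : Rabs (- h * c) <= x / 2 * c).
{ rewrite Rabs_mult, Rabs_Ropp, (Rabs_pos_eq c) by lra. apply Rmult_le_compat_r; lra. }
apply Rle_trans with (c ^ n * exp (- x * c) * ((- h * c) ^ 2 * exp (x / 2 * c))).
{ apply Rmult_le_compat_l; auto. eapply Rle_trans; [apply T2|].
  apply Rmult_le_compat_l; [apply pow2_ge_0 | apply exp_le_compat; auto]. }
replace (- (x / 2) * c) with (- x * c + x / 2 * c) by field.
rewrite exp_plus. right; simpl; ring.
Qed.

Lemma Kcosh_taylor_remainder (n : nat) (x h : R) : 0 < x -> Rabs h <= x / 2 ->
  Rabs (Kcosh n (x + h) - Kcosh n x + h * Kcosh (S n) x) <= h ^ 2 * Kcosh (S (S n)) (x / 2).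
Proof.
intros Hx Hh.
assert (Hxh : 0 < x + h) by (apply Rabs_le_between in Hh; lra).
destruct (Kcosh_correct n (x + h) Hxh) as [I1 _].
destruct (Kcosh_correct n x Hx) as [I2 _].
destruct (Kcosh_correct (S n) x Hx) as [I3 _].
destruct (Kcosh_correct (S (S n)) (x / 2)) as [I4 _]; [lra|].
refine (RInt_gen_norm _ _ _ _
  (filter_prod_at_point_pinfty 0 (fun a b => a <= b) _) _
  (is_RInt_gen_plus _ _ _ _ (is_RInt_gen_minus _ _ _ _ I1 I2) (is_RInt_gen_scal _ h _ I3))
  (is_RInt_gen_scal _ (h ^ 2) _ I4)).
- intros; lra.
- apply (filter_prod_at_point_pinfty 0 (fun a b => forall t, a <= t <= b -> _)).
  intros b _ t _. apply kcosh_taylor_remainder; auto.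
Qed.

Lemma is_derive_Kcosh (n : nat) (x : R) : 0 < x -> is_derive (Kcosh n) x (- Kcosh (S n) x).
Proof.
intro Hx. apply is_derive_Reals. intros eps Heps.
set (C := Kcosh (S (S n)) (x / 2)).
assert (HC : 0 < C) by (apply Kcosh_pos; lra).
assert (Hd : 0 < Rmin (x / 2) (eps / C)) by (apply Rmin_pos; [lra | apply Rdiv_lt_0_compat; lra]).
exists (mkposreal _ Hd). intros h Hh0 Hh; simpl in Hh.
pose proof (Rmin_l (x / 2) (eps / C)). pose proof (Rmin_r (x / 2) (eps / C)).
assert (Hah : 0 < Rabs h) by (apply Rabs_pos_lt; auto).
pose proof (Kcosh_taylor_remainder n x h Hx ltac:(lra)) as HR; fold C in HR.
replace ((Kcosh n (x + h) - Kcosh n x) / h - - Kcosh (S n) x)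
  with ((Kcosh n (x + h) - Kcosh n x + h * Kcosh (S n) x) / h) by (field; auto).
unfold Rdiv. rewrite Rabs_mult, Rabs_inv.
apply Rle_lt_trans with (Rabs h * C).
{ apply (Rmult_le_reg_r (Rabs h)); auto.
  replace (Rabs (Kcosh n (x + h) - Kcosh n x + h * Kcosh (S n) x) * / Rabs h * Rabs h)
    with (Rabs (Kcosh n (x + h) - Kcosh n x + h * Kcosh (S n) x)) by (field; lra).
  replace (Rabs h * C * Rabs h) with (h ^ 2 * C) by (rewrite <- (pow2_abs h); ring). auto. }
apply (Rmult_lt_compat_r C) in Hh; [|auto].
eapply Rlt_le_trans; [exact Hh|].
apply Rle_trans with (eps / C * C); [apply Rmult_le_compat_r; lra | right; field; lra].
Qed.

Definition I1coef (k : nat) : R := / (INR (fact k) * INR (fact (S k))).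

Definition I1ser (z : R) : R := PSeries I1coef z.

Lemma I1coef_pos (k : nat) : 0 < I1coef k.
Proof. apply Rinv_0_lt_compat, Rmult_lt_0_compat; apply INR_fact_lt_0. Qed.

Lemma I1coef_succ (k : nat) : I1coef k = INR (S k) * INR (S (S k)) * I1coef (S k).
Proof.
unfold I1coef. rewrite (fact_simpl (S k)), (fact_simpl k), !mult_INR.
pose proof (INR_fact_lt_0 k).
assert (0 < INR (S k)) by (apply lt_0_INR; lia).
assert (0 < INR (S (S k))) by (apply lt_0_INR; lia).
field; repeat split; lra.
Qed.

Lemma CV_radius_I1coef : CV_radius I1coef = p_infty.
Proof.
apply CV_radius_infinite_DAlembert.
- intro n. pose proof (I1coef_pos n). lra.
- apply (is_lim_seq_le_le (fun _ => 0) _ (fun n => / INR (S n))).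
  + intro n. rewrite (I1coef_succ n).
    pose proof (I1coef_pos (S n)).
    assert (1 <= INR (S n)) by (apply (le_INR 1); lia).
    assert (1 <= INR (S (S n))) by (apply (le_INR 1); lia).
    replace (I1coef (S n) / (INR (S n) * INR (S (S n)) * I1coef (S n)))
      with (/ (INR (S n) * INR (S (S n)))) by (field; repeat split; lra).
    rewrite Rabs_pos_eq by (left; apply Rinv_0_lt_compat; nra).
    split; [left; apply Rinv_0_lt_compat; nra | apply Rinv_le_contravar; nra].
  + apply is_lim_seq_const.
  + replace (Finite 0) with (Rbar_inv p_infty) by reflexivity.
    apply is_lim_seq_inv; [|discriminate].
    apply (is_lim_seq_incr_1 INR), is_lim_seq_INR.
Qed.

Lemma ex_series_pseries (a : nat -> R) (z : R) :
  ex_pseries a z -> ex_series (fun k => a k * z ^ k).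
Proof.
apply ex_series_ext. intro k.
rewrite pow_n_pow. unfold scal; simpl; unfold mult; simpl. ring.
Qed.

Lemma ex_series_I1coef (z : R) : ex_series (fun k => I1coef k * z ^ k).
Proof. apply ex_series_pseries, CV_radius_inside. rewrite CV_radius_I1coef. exact I. Qed.

Lemma BesselI1_I1ser (x : R) : BesselI1 x = x / 2 * I1ser ((x / 2) ^ 2).
Proof.
unfold BesselI1, I1ser, PSeries. rewrite <- Series_scal_l. apply Series_ext. intro k.
unfold I1coef. rewrite <- pow_mult, pow_add, pow_1, Nat.mul_comm.
unfold Rdiv; ring.
Qed.

Lemma Series_nonneg (a : nat -> R) :
  (forall n, 0 <= a n) -> ex_series a -> 0 <= Series a.
Proof.
intros Ha Hex.
replace 0 with (0 * Series (fun _ => 0)) at 1 by ring.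
rewrite <- Series_scal_l. apply Series_le; auto. intro n; rewrite Rmult_0_l; split; [lra | auto].
Qed.

Lemma I1ser_tail (z : R) :
  I1ser z = 1 + Series (fun k => I1coef (S k) * z ^ S k).
Proof.
unfold I1ser, PSeries. rewrite Series_incr_1 by apply ex_series_I1coef.
unfold I1coef at 1. simpl. field.
Qed.

Lemma I1ser_ge_1 (z : R) : 0 <= z -> 1 <= I1ser z.
Proof.
intro Hz. rewrite I1ser_tail.
assert (0 <= Series (fun k => I1coef (S k) * z ^ S k)); [|lra].
apply Series_nonneg.
- intro n. apply Rmult_le_pos; [left; apply I1coef_pos | apply pow_le; auto].
- apply (ex_series_incr_1 (fun k => I1coef k * z ^ k)), ex_series_I1coef.
Qed.

Lemma I1ser_derive_le (s : R) : 0 <= s ->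
  s * PSeries (PS_derive I1coef) (s ^ 2) <= I1ser (s ^ 2).
Proof.
intro Hs. set (z := s ^ 2).
assert (Hz : 0 <= z) by apply pow2_ge_0.
assert (Htail := proj1 (ex_series_incr_1 _) (ex_series_I1coef z)).
assert (Hle : Series (fun k => 2 * s * (PS_derive I1coef k * z ^ k))
  <= Series (fun k => I1coef k * z ^ k + I1coef (S k) * z ^ S k)).
{ apply Series_le.
  - intro k. unfold PS_derive. rewrite (I1coef_succ k).
    pose proof (I1coef_pos (S k)). pose proof (pow_le z k Hz).
    set (n1 := INR (S k)). assert (1 <= n1) by (apply (le_INR 1); lia).
    replace (INR (S (S k))) with (n1 + 1) by (unfold n1; rewrite (S_INR (S k)); ring).
    set (w := I1coef (S k) * z ^ k). assert (0 <= w) by (apply Rmult_le_pos; lra).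
    replace (2 * s * (n1 * I1coef (S k) * z ^ k)) with (w * (2 * s * n1)) by (unfold w; ring).
    replace (n1 * (n1 + 1) * I1coef (S k) * z ^ k + I1coef (S k) * z ^ S k)
      with (w * (n1 * (n1 + 1) + s ^ 2)) by (unfold w, z; simpl; ring).
    pose proof (pow2_ge_0 (s - n1)).
    split; [apply Rmult_le_pos; nra | apply Rmult_le_compat_l; nra].
  - apply (@ex_series_plus R_AbsRing R_NormedModule); auto. apply ex_series_I1coef. }
rewrite Series_scal_l, Series_plus in Hle by (auto; apply ex_series_I1coef).
pose proof (I1ser_tail z). pose proof (I1ser_ge_1 z Hz). unfold I1ser, PSeries in *.
nra.
Qed.

Lemma is_derive_I1ser_sq (x : R) :
  is_derive (fun x => I1ser ((x / 2) ^ 2)) x (x / 2 * PSeries (PS_derive I1coef) ((x / 2) ^ 2)).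
Proof.
apply (is_derive_comp I1ser (fun x => (x / 2) ^ 2)).
- apply is_derive_PSeries. rewrite CV_radius_I1coef. exact I.
- auto_derive; auto. field.
Qed.

Lemma ex_derive_BesselI1 (x : R) : ex_derive BesselI1 x.
Proof.
apply (ex_derive_ext (fun x => x / 2 * I1ser ((x / 2) ^ 2))).
- intro; symmetry; apply BesselI1_I1ser.
- apply ex_derive_mult; [auto_derive; auto | eexists; apply is_derive_I1ser_sq].
Qed.

Lemma BesselI1_ge_half (x : R) : 0 <= x -> x / 2 <= BesselI1 x.
Proof.
intro Hx. rewrite BesselI1_I1ser. pose proof (I1ser_ge_1 ((x / 2) ^ 2) (pow2_ge_0 _)). nra.
Qed.

Lemma exp_neg_I1ser_sq_decreasing (x y : R) : 0 <= x <= y ->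
  exp (- y) * I1ser ((y / 2) ^ 2) <= exp (- x) * I1ser ((x / 2) ^ 2).
Proof.
intro Hxy.
set (dP := PSeries (PS_derive I1coef)).
assert (Hd : forall t, is_derive (fun t => exp (- t) * I1ser ((t / 2) ^ 2)) t
  (exp (- t) * (t / 2 * dP ((t / 2) ^ 2) - I1ser ((t / 2) ^ 2)))).
{ intro t.
  replace (exp (- t) * (t / 2 * dP ((t / 2) ^ 2) - I1ser ((t / 2) ^ 2)))
    with (- exp (- t) * I1ser ((t / 2) ^ 2) + exp (- t) * (t / 2 * dP ((t / 2) ^ 2))) by ring.
  apply (is_derive_mult (fun t => exp (- t)) (fun t => I1ser ((t / 2) ^ 2))); [auto_derive; auto; ring | apply is_derive_I1ser_sq |].
  intros; apply Rmult_comm. }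
destruct (MVT_gen _ x y _ (fun t _ => Hd t)) as [c [Hc Hmvt]].
- intros t _. apply derivable_continuous_pt. eexists. apply is_derive_Reals, Hd.
- rewrite Rmin_left, Rmax_right in Hc by lra.
  pose proof (I1ser_derive_le (c / 2) ltac:(lra)). pose proof (exp_pos (- c)).
  assert (exp (- c) * (c / 2 * dP ((c / 2) ^ 2) - I1ser ((c / 2) ^ 2)) <= 0) by (unfold dP; nra).
  nra.
Qed.

Lemma BesselI1_le_shift (x y : R) : 0 < x -> x <= y ->
  BesselI1 y <= y / x * exp (y - x) * BesselI1 x.
Proof.
intros Hx Hxy. rewrite !BesselI1_I1ser.
pose proof (exp_neg_I1ser_sq_decreasing x y ltac:(lra)) as Hdec.
rewrite !exp_Ropp in Hdec.
pose proof (exp_pos x). pose proof (exp_pos y).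
replace (exp (y - x)) with (exp y / exp x)
  by (unfold Rminus; rewrite exp_plus, exp_Ropp; field; lra).
apply (Rmult_le_reg_r (/ exp y)); [apply Rinv_0_lt_compat; lra|].
replace (y / x * (exp y / exp x) * (x / 2 * I1ser ((x / 2) ^ 2)) * / exp y)
  with (y / 2 * (/ exp x * I1ser ((x / 2) ^ 2))) by (field; lra).
replace (y / 2 * I1ser ((y / 2) ^ 2) * / exp y)
  with (y / 2 * (/ exp y * I1ser ((y / 2) ^ 2))) by ring.
apply Rmult_le_compat_l; lra.
Qed.

Lemma G_diag (y : R) : G y y = BesselI1 y * BesselK1 y.
Proof. unfold G. rewrite Rmin_left, Rmax_left by lra. reflexivity. Qed.

Lemma G_diag_pos (y : R) : 0 < y -> 0 < G y y.
Proof.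
intro Hy. rewrite G_diag, BesselK1_Kcosh by auto.
pose proof (BesselI1_ge_half y ltac:(lra)). pose proof (Kcosh_pos 1 y Hy). nra.
Qed.

Lemma ex_derive_G_diag (y : R) : 0 < y -> ex_derive (fun y => G y y) y.
Proof.
intro Hy. apply (ex_derive_ext (fun y => BesselI1 y * BesselK1 y)); [intro; symmetry; apply G_diag|].
apply ex_derive_mult; [apply ex_derive_BesselI1|].
apply (ex_derive_ext_loc (Kcosh 1)).
- exists (mkposreal y Hy). intros t Ht.
  unfold ball in Ht; simpl in Ht; unfold AbsRing_ball, abs, minus, plus, opp in Ht; simpl in Ht.
  apply Rabs_def2 in Ht. symmetry; apply BesselK1_Kcosh; lra.
- eexists. apply is_derive_Kcosh, Hy.
Qed.

(* [K1 y <= exp (x - y) K1 x] and [I1 y <= (y / x) exp (y - x) I1 x]: the exponentials cancel. *)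
Lemma G_diag_le_shift (x y : R) : 0 < x -> x <= y -> G y y <= y / x * G x x.
Proof.
intros Hx Hxy. rewrite !G_diag, !BesselK1_Kcosh by lra.
pose proof (Kcosh_le_shift 1 x y Hx Hxy).
pose proof (BesselI1_le_shift x y Hx Hxy).
pose proof (Kcosh_pos 1 y ltac:(lra)).
pose proof (BesselI1_ge_half y ltac:(lra)). pose proof (exp_pos (y - x)).
apply Rle_trans with ((y / x * exp (y - x) * BesselI1 x) * (exp (x - y) * Kcosh 1 x)).
{ apply Rmult_le_compat; lra. }
replace (exp (x - y)) with (/ exp (y - x)) by (rewrite <- exp_Ropp; f_equal; ring).
right; field; lra.
Qed.

Definition G_over_sq (y : R) : R := G y y / y ^ 2.

Lemma G_over_sq_decreasing (x y : R) : 0 < x -> x < y -> G_over_sq y < G_over_sq x.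
Proof.
intros Hx Hxy. unfold G_over_sq.
pose proof (G_diag_le_shift x y Hx ltac:(lra)). pose proof (G_diag_pos x Hx).
apply Rle_lt_trans with (y / x * G x x / y ^ 2).
{ apply Rmult_le_compat_r; [left; apply Rinv_0_lt_compat, pow_lt|]; lra. }
replace (y / x * G x x / y ^ 2) with (G x x / x ^ 2 * (x / y)) by (field; lra).
rewrite <- (Rmult_1_r (G x x / x ^ 2)) at 2.
apply Rmult_lt_compat_l.
- apply Rdiv_lt_0_compat; [|apply pow_lt]; lra.
- apply (Rmult_lt_reg_r y); [lra|]. field_simplify; lra.
Qed.

Lemma G_over_sq_continuous (y : R) : 0 < y -> continuity_pt G_over_sq y.
Proof.
intro Hy.
destruct (ex_derive_G_diag y Hy) as [l Hl].
assert (ex_derive G_over_sq y) as [l' Hl'].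
{ apply ex_derive_div; [exists l; auto | auto_derive; auto | apply pow_nonzero; lra]. }
apply derivable_continuous_pt. exists l'. apply is_derive_Reals, Hl'.
Qed.

(* For [y <= 1], [G y y >= (y / 2) * K1 1], since [I1 y >= y / 2] and [K1] decreases. *)
Lemma G_over_sq_unbounded (B x0 : R) : 0 < B -> 0 < x0 ->
  exists x, 0 < x <= x0 /\ B <= G_over_sq x.
Proof.
intros HB Hx0.
set (k := Kcosh 1 1). assert (Hk : 0 < k) by (apply Kcosh_pos; lra).
set (x := Rmin (Rmin x0 1) (k / (2 * B))).
assert (Hx : 0 < x) by (apply Rmin_pos; [apply Rmin_pos | apply Rdiv_lt_0_compat]; lra).
assert (Hx1 : x <= Rmin x0 1) by apply Rmin_l.
assert (HxB : x <= k / (2 * B)) by apply Rmin_r.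
pose proof (Rmin_l x0 1). pose proof (Rmin_r x0 1).
exists x; split; [lra|].
unfold G_over_sq. rewrite G_diag, BesselK1_Kcosh by lra.
pose proof (Kcosh_le_shift 1 x 1 Hx ltac:(lra)) as HK; fold k in HK.
assert (exp (x - 1) <= exp 0) by (apply exp_le_compat; lra). rewrite exp_0 in *.
pose proof (Kcosh_pos 1 x Hx). pose proof (exp_pos (x - 1)).
pose proof (BesselI1_ge_half x ltac:(lra)).
assert (x / 2 * k <= BesselI1 x * Kcosh 1 x) by (apply Rmult_le_compat; nra).
apply Rle_trans with (x / 2 * k / x ^ 2).
2:{ apply Rmult_le_compat_r; [left; apply Rinv_0_lt_compat, pow_lt|]; lra. }
replace (x / 2 * k / x ^ 2) with (k / (2 * x)) by (field; lra).
apply (Rmult_le_reg_r (2 * x)); [lra|].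
replace (k / (2 * x) * (2 * x)) with k by (field; lra).
apply (Rmult_le_compat_l B) in HxB; [|lra].
replace (B * (k / (2 * B))) with (k / 2) in HxB by (field; lra). lra.
Qed.

Lemma G_over_sq_attains (c y0 : R) : 0 < c -> 0 < y0 -> G_over_sq y0 <= c ->
  exists y, 0 < y /\ G_over_sq y = c.
Proof.
intros Hc Hy0 [Hlt | Heq]; [|exists y0; auto].
destruct (G_over_sq_unbounded (c + 1) (y0 / 2)) as [x [Hx Hfx]]; [lra | lra |].
destruct (Ranalysis5.IVT_interv (fun y => c - G_over_sq y) x y0) as [y [Hy Hfy]]; try lra.
- intros y Hy. apply continuity_pt_minus; [apply continuity_pt_const; intros u v; reflexivity |].
  apply G_over_sq_continuous. lra.
- exists y. split; lra.
Qed.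

Lemma fixed_point_iff_G_over_sq (M E y : R) : 0 < M -> 0 < E -> 0 < y ->
  (y = M * sqrt (G y y / E) <-> G_over_sq y = E / M ^ 2).
Proof.
intros HM HE Hy. unfold G_over_sq. pose proof (G_diag_pos y Hy).
assert (HGE : 0 <= G y y / E) by (apply Rlt_le, Rdiv_lt_0_compat; lra).
split.
- intro Hfix.
  assert (Hs : sqrt (G y y / E) = y / M).
  { replace (y / M) with (M * sqrt (G y y / E) / M) by (rewrite <- Hfix; reflexivity).
    field; lra. }
  assert (HGy : G y y = E * (y / M) ^ 2) by (rewrite <- Hs, pow2_sqrt by auto; field; lra).
  rewrite HGy. field; lra.
- intro Hf.
  assert (HGy : G y y / E = (y / M) ^ 2).
  { replace (G y y) with (E / M ^ 2 * y ^ 2) by (rewrite <- Hf; field; lra). field; lra. }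
  rewrite HGy, sqrt_pow2 by (apply Rlt_le, Rdiv_lt_0_compat; lra). field; lra.
Qed.

Lemma G_over_sq_le_energy (M p y : R) : 0 < M -> 0 < y ->
  G_over_sq y <= (p ^ 2 + M ^ 2 / y ^ 2) * G y y / M ^ 2.
Proof.
intros HM Hy. unfold G_over_sq. pose proof (G_diag_pos y Hy).
assert (0 < y ^ 2) by (apply pow_lt; lra). assert (0 < M ^ 2) by (apply pow_lt; lra).
replace ((p ^ 2 + M ^ 2 / y ^ 2) * G y y / M ^ 2)
  with (p ^ 2 * G y y / M ^ 2 + G y y / y ^ 2) by (field; lra).
assert (0 <= p ^ 2 * G y y / M ^ 2); [|lra].
apply Rmult_le_pos; [apply Rmult_le_pos; [apply pow2_ge_0 | lra] | left; apply Rinv_0_lt_compat; lra].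
Qed.

Lemma is_derive_hamiltonian_chain (g : R -> R) (M : R) (p q : R -> R) (t dp dq : R) :
  let H pp qq := / 2 * (pp ^ 2 + M ^ 2 / qq ^ 2) * g qq in
  q t <> 0 -> ex_derive g (q t) -> is_derive p t dp -> is_derive q t dq ->
  is_derive (fun s => H (p s) (q s)) t
    (Derive (fun pp => H pp (q t)) (p t) * dp + Derive (fun qq => H (p t) qq) (q t) * dq).
Proof.
intros H Hq [dg Hg] Dp Dq. unfold H.
replace (Derive (fun pp => / 2 * (pp ^ 2 + M ^ 2 / q t ^ 2) * g (q t)) (p t))
  with (p t * g (q t)) by (symmetry; apply is_derive_unique; auto_derive; auto; field).
replace (Derive (fun qq => / 2 * (p t ^ 2 + M ^ 2 / qq ^ 2) * g qq) (q t))
  with (/ 2 * (- (2 * M ^ 2) / q t ^ 3) * g (q t) + / 2 * (p t ^ 2 + M ^ 2 / q t ^ 2) * dg).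
2:{ symmetry; apply is_derive_unique.
    auto_derive; [repeat split; auto; eexists; eassumption |].
    change (fun x => g x) with g. rewrite (is_derive_unique _ _ _ Hg). field; auto. }
auto_derive.
- repeat split; try (eexists; eassumption). auto.
- change (fun x => p x) with p. change (fun x => q x) with q. change (fun x => g x) with g.
  rewrite (is_derive_unique _ _ _ Dp), (is_derive_unique _ _ _ Dq), (is_derive_unique _ _ _ Hg).
  field; auto.
Qed.

Lemma le_of_G_over_sq_le (x y : R) : 0 < x -> 0 < y -> G_over_sq y <= G_over_sq x -> x <= y.
Proof.
intros Hx Hy Hle. apply Rnot_lt_le. intro Hyx.
pose proof (G_over_sq_decreasing y x Hy Hyx). lra.
Qed.

Lemma is_derive_Hpeak_hamilton_flow (M : R) (p q : R -> R) (t : R) : 0 < q t ->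
  is_derive q t (Derive (fun pp => Hpeak M pp (q t)) (p t)) ->
  is_derive p t (- Derive (fun qq => Hpeak M (p t) qq) (q t)) ->
  is_derive (fun s => Hpeak M (p s) (q s)) t 0.
Proof.
intros Hq Dq Dp.
replace 0 with (Derive (fun pp => Hpeak M pp (q t)) (p t)
                  * - Derive (fun qq => Hpeak M (p t) qq) (q t)
                + Derive (fun qq => Hpeak M (p t) qq) (q t)
                  * Derive (fun pp => Hpeak M pp (q t)) (p t)) by ring.
apply (is_derive_hamiltonian_chain (fun y => G y y)); auto.
- lra.
- apply ex_derive_G_diag, Hq.
Qed.

Lemma Rbar_lt_between (a b : Rbar) (s u t : R) :
  Rbar_lt a s -> Rbar_lt s b -> Rbar_lt a u -> Rbar_lt u b ->
  Rmin s u <= t <= Rmax s u -> Rbar_lt a t /\ Rbar_lt t b.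
Proof.
intros Has Hsb Hau Hub Ht. split.
- apply (Rbar_lt_le_trans _ (Rmin s u)); [apply Rmin_case; auto | simpl; lra].
- apply (Rbar_le_lt_trans _ (Rmax s u)); [simpl; lra | apply Rmax_case; auto].
Qed.

Lemma Hpeak_conserved (M : R) (a b : Rbar) (q p : R -> R) (t0 t : R) :
  Rbar_lt a t0 -> Rbar_lt t0 b -> Rbar_lt a t -> Rbar_lt t b ->
  (forall s : R, Rbar_lt a s -> Rbar_lt s b -> 0 < q s) ->
  (forall s : R, Rbar_lt a s -> Rbar_lt s b ->
     is_derive q s (Derive (fun pp => Hpeak M pp (q s)) (p s)) /\
     is_derive p s (- Derive (fun qq => Hpeak M (p s) qq) (q s))) ->
  Hpeak M (p t) (q t) = Hpeak M (p t0) (q t0).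
Proof.
intros Ha0 Hb0 Ha Hb Hpos Hham.
assert (Hflow : forall s, Rmin t0 t <= s <= Rmax t0 t ->
  is_derive (fun s => Hpeak M (p s) (q s)) s 0).
{ intros s Hs. destruct (Rbar_lt_between a b t0 t s) as [Has Hsb]; auto.
  destruct (Hham s Has Hsb). apply is_derive_Hpeak_hamilton_flow; auto. }
destruct (MVT_gen (fun s => Hpeak M (p s) (q s)) t0 t (fun _ => 0)) as [w [_ Hw]].
- intros s Hs. apply Hflow. lra.
- intros s Hs. apply derivable_continuous_pt. exists 0. apply is_derive_Reals, Hflow, Hs.
- lra.
Qed.

Theorem proposition5 (M : R) (a b : Rbar) (q p : R -> R) (t0 E : R) :
  0 < M ->
  Rbar_lt a t0 -> Rbar_lt t0 b ->
  (forall t : R, Rbar_lt a t -> Rbar_lt t b -> 0 < q t) ->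
  (forall t : R, Rbar_lt a t -> Rbar_lt t b ->
     is_derive q t (Derive (fun pp => Hpeak M pp (q t)) (p t)) /\
     is_derive p t (- Derive (fun qq => Hpeak M (p t) qq) (q t))) ->
  E = (p t0 ^ 2 + M ^ 2 / q t0 ^ 2) * G (q t0) (q t0) ->
  0 < E ->
  exists qs : R,
    (0 < qs /\ qs = M * sqrt (G qs qs / E)) /\
    (forall y : R, 0 < y -> y = M * sqrt (G y y / E) -> y = qs) /\
    (forall t : R, Rbar_lt a t -> Rbar_lt t b -> qs <= q t).
Proof.
intros HM Ha0 Hb0 Hpos Hham HE HEpos.
assert (Hbound : forall t : R, Rbar_lt a t -> Rbar_lt t b -> G_over_sq (q t) <= E / M ^ 2).
{ intros t Ha Hb.
  pose proof (Hpeak_conserved M a b q p t0 t Ha0 Hb0 Ha Hb Hpos Hham) as Hcons.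
  unfold Hpeak in Hcons.
  replace E with ((p t ^ 2 + M ^ 2 / q t ^ 2) * G (q t) (q t)) by lra.
  apply G_over_sq_le_energy; auto. }
destruct (G_over_sq_attains (E / M ^ 2) (q t0)) as [qs [Hqs Hfix]]; auto.
{ apply Rdiv_lt_0_compat; [|apply pow_lt]; lra. }
exists qs. split; [|split].
- split; [auto | apply fixed_point_iff_G_over_sq; auto].
- intros y Hy Hyfix. apply fixed_point_iff_G_over_sq in Hyfix; auto.
  apply Rle_antisym; apply le_of_G_over_sq_le; lra.
- intros t Ha Hb. apply le_of_G_over_sq_le; auto. rewrite Hfix. apply Hbound; auto.
Qed.
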